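(* Let $Q=ABCD$ be a non-degenerate parallelogram of perimeter $2$ and $Q^\circ=KLMN$ its dual. Then $|KL|=|BC|$, $|LM|=|AB|$, $|KM|=|AC|$, and $Q^\circ$ is a parallelogram congruent to $Q$ (parallelograms are self-dual up to isometry).
   Context: Identify $\mathbb{R}^2$ with $\mathbb{C}$. A quadrangle $Q=ABCD$ is an ordered 4-tuple of points $A,B,C,D\in\mathbb{C}$: $A$ is the first vertex and the order $A\to B\to C\to D\to A$ is the direction of traversal. Its edge vectors are $z_1=B-A$, $z_2=C-B$, $z_3=D-C$, $z_4=A-D$, so $z_1+z_2+z_3+z_4=0$; its perimeter is $|z_1|+|z_2|+|z_3|+|z_4|$. $Q$ is non-degenerate if each pair of consecutive edge vectors $(z_1,z_2),(z_2,z_3),(z_3,z_4),(z_4,z_1)$ consists of nonzero, non-collinear vectors. Associated plane: for a non-degenerate $Q$ of perimeter $2$, choose $u_1,\dots,u_4\in\mathbb{C}$ with $u_k^2=z_k$, where $u_1$ is an arbitrary square root of $z_1$ and for $k=1,2,3$ the sign of $u_{k+1}$ is chosen so that $\operatorname{Im}(\overline{u_k}u_{k+1})$ has the same sign as $\operatorname{Im}(\overline{z_k}z_{k+1})$. Write $u_k=a_k+i b_k$ and $\bar a=(a_1,a_2,a_3,a_4)$, $\bar b=(b_1,b_2,b_3,b_4)$; these are orthonormal in $\mathbb{R}^4$. Let $\Pi=\operatorname{span}(\bar a,\bar b)$ and $\Pi^\perp$ its orthogonal complement. Dual quadrangle: choose an orthonormal basis $(\bar c,\bar d)$ of $\Pi^\perp$,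 put $w_k=(c_k+i d_k)^2$; then $\sum_k w_k=0$ and $\sum_k|w_k|=2$. The dual quadrangle $Q^\circ=KLMN$ is the quadrangle with $L-K=w_1$, $M-L=w_2$, $N-M=w_3$, $K-N=w_4$. It is determined up to rotation, reflection and translation. *)

From Stdlib Require Import Reals.
Open Scope R_scope.

(* A point / complex number x + i y is the pair (x, y). *)
Definition pt := (R * R)%type.
Definition re (p : pt) : R := fst p.
Definition im (p : pt) : R := snd p.
Definition psub (p q : pt) : pt := (fst p - fst q, snd p - snd q).
Definition padd (p q : pt) : pt := (fst p + fst q, snd p + snd q).
Definition cabs (p : pt) : R := sqrt (fst p * fst p + snd p * snd p).
Definition cmul (p q : pt) : pt :=
  (fst p * fst q - snd p * snd q, fst p * snd q + snd p * fst q).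
Definition csq (p : pt) : pt := cmul p p.
Definition imconjmul (p q : pt) : R := fst p * snd q - snd p * fst q.

Definition good_pair (p q : pt) : Prop :=
  p <> (0, 0) /\ q <> (0, 0) /\ imconjmul p q <> 0.

Definition nondegenerate (A B C D : pt) : Prop :=
  let z1 := psub B A in let z2 := psub C B in
  let z3 := psub D C in let z4 := psub A D in
  good_pair z1 z2 /\ good_pair z2 z3 /\ good_pair z3 z4 /\ good_pair z4 z1.

Definition perimeter (A B C D : pt) : R :=
  cabs (psub B A) + cabs (psub C B) + cabs (psub D C) + cabs (psub A D).

Definition parallelogram (A B C D : pt) : Prop := psub B A = psub C D.

Definition same_sign (x y : R) : Prop := (0 < x /\ 0 < y) \/ (x < 0 /\ y < 0).

Definition dot4 (x1 x2 x3 x4 y1 y2 y3 y4 : R) : R :=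
  x1 * y1 + x2 * y2 + x3 * y3 + x4 * y4.

Definition admissible_roots (A B C D u1 u2 u3 u4 : pt) : Prop :=
  let z1 := psub B A in let z2 := psub C B in
  let z3 := psub D C in let z4 := psub A D in
  csq u1 = z1 /\ csq u2 = z2 /\ csq u3 = z3 /\ csq u4 = z4 /\
  same_sign (imconjmul u1 u2) (imconjmul z1 z2) /\
  same_sign (imconjmul u2 u3) (imconjmul z2 z3) /\
  same_sign (imconjmul u3 u4) (imconjmul z3 z4).

(* v_k = c_k + i d_k where (c, d) is an orthonormal basis of Pi^perp,
   Pi = span(a, b), u_k = a_k + i b_k.  (Pi^perp is 2-dimensional since
   a, b are orthonormal, so an orthonormal pair in Pi^perp is a basis.) *)
Definition orthonormal_basis_perp (u1 u2 u3 u4 v1 v2 v3 v4 : pt) : Prop :=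
  let c1 := re v1 in let c2 := re v2 in let c3 := re v3 in let c4 := re v4 in
  let d1 := im v1 in let d2 := im v2 in let d3 := im v3 in let d4 := im v4 in
  let a1 := re u1 in let a2 := re u2 in let a3 := re u3 in let a4 := re u4 in
  let b1 := im u1 in let b2 := im u2 in let b3 := im u3 in let b4 := im u4 in
  dot4 c1 c2 c3 c4 c1 c2 c3 c4 = 1 /\
  dot4 d1 d2 d3 d4 d1 d2 d3 d4 = 1 /\
  dot4 c1 c2 c3 c4 d1 d2 d3 d4 = 0 /\
  dot4 c1 c2 c3 c4 a1 a2 a3 a4 = 0 /\
  dot4 c1 c2 c3 c4 b1 b2 b3 b4 = 0 /\
  dot4 d1 d2 d3 d4 a1 a2 a3 a4 = 0 /\
  dot4 d1 d2 d3 d4 b1 b2 b3 b4 = 0.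

Definition dual_quadrangle (A B C D K L M N : pt) : Prop :=
  exists u1 u2 u3 u4 v1 v2 v3 v4 : pt,
    admissible_roots A B C D u1 u2 u3 u4 /\
    orthonormal_basis_perp u1 u2 u3 u4 v1 v2 v3 v4 /\
    psub L K = csq v1 /\ psub M L = csq v2 /\
    psub N M = csq v3 /\ psub K N = csq v4.

Definition pdist (p q : pt) : R := cabs (psub p q).

Definition isometry (f : pt -> pt) : Prop :=
  forall p q, pdist (f p) (f q) = pdist p q.

From Stdlib Require Import Reals Nsatz Lra.
Open Scope R_scope.
Set Implicit Arguments.

(* For a parallelogram z3 = -z1 and z4 = -z2, so the admissible roots are
   u3 = e i u1 and u4 = e i u2 with one sign e, and the associated plane is
   spanned by (a1, a2, -e b1, -e b2) and (b1, b2, e a1, e a2).  These extend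
   to an explicit orthonormal basis of R^4, so an orthonormal frame of the
   complement is fixed by a unit complex number m and an orientation, and the
   dual edges come out as m^2 (z2, z1, z4, z3) up to conjugation: KLMN is the
   image of CBAD under an isometry. *)

Definition popp (p : pt) : pt := (- fst p, - snd p).

Lemma pdist_comm (p q : pt) : pdist p q = pdist q p.
Proof.
  destruct p as [x y], q as [x' y']; unfold pdist, cabs, psub; simpl.
  f_equal; ring.
Qed.

Lemma padd_psub (b c : pt) : padd c (psub b c) = b.
Proof. destruct b, c; unfold padd, psub; simpl; f_equal; ring. Qed.

Lemma cabs_csq (u : pt) : cabs (csq u) = fst u * fst u + snd u * snd u.
Proof.
  destruct u as [a b]; unfold cabs, csq, cmul; simpl.
  replace ((a*a - b*b) * (a*a - b*b) + (a*b + b*a) * (a*b + b*a))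
    with ((a*a + b*b) * (a*a + b*b)) by ring.
  apply sqrt_square; nra.
Qed.

Lemma imconjmul_popp (p q : pt) : imconjmul (popp p) (popp q) = imconjmul p q.
Proof. unfold imconjmul, popp; simpl; ring. Qed.

(* [orth_map t (r1, r2)] is [z |-> r z] for [t = 1] and [z |-> conj (r z)]
   for [t = -1]; for [|r| = 1] these are all the linear isometries. *)
Definition orth_map (t : R) (r p : pt) : pt := (fst (cmul r p), t * snd (cmul r p)).

Section OrthMap.

Variables t r1 r2 : R.
Hypothesis Ht : t * t = 1.
Hypothesis Hr : r1 * r1 + r2 * r2 = 1.

Lemma orth_mapK (p : pt) : orth_map t (r1, - t * r2) (orth_map t (r1, r2) p) = p.
Proof.
  destruct p as [x y]; unfold orth_map, cmul; simpl.
  f_equal; nsatz.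
Qed.

Lemma isometry_affine_orth_map (c k : pt) :
  isometry (fun p => padd c (orth_map t (r1, r2) (psub p k))).
Proof.
  intros [x y] [x' y']; destruct c, k.
  unfold pdist, cabs, padd, psub, orth_map, cmul; simpl.
  f_equal; nsatz.
Qed.

End OrthMap.

Lemma congruent_of_orth_image (A B C D K L M N : pt) (t r1 r2 : R) :
  t * t = 1 -> r1 * r1 + r2 * r2 = 1 ->
  psub L K = orth_map t (r1, r2) (psub B C) ->
  psub M K = orth_map t (r1, r2) (psub A C) ->
  psub N K = orth_map t (r1, r2) (psub D C) ->
  exists f : pt -> pt, isometry f /\ f K = C /\ f L = B /\ f M = A /\ f N = D.
Proof.
  intros Ht Hr EL EM EN.
  assert (Hr' : r1 * r1 + (- t * r2) * (- t * r2) = 1).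
  { replace (r1 * r1 + (- t * r2) * (- t * r2)) with (r1 * r1 + t * t * (r2 * r2)) by ring.
    rewrite Ht; lra. }
  exists (fun p => padd C (orth_map t (r1, - t * r2) (psub p K))).
  split; [exact (isometry_affine_orth_map Ht Hr' C K)|].
  rewrite EL, EM, EN, !orth_mapK, !padd_psub by assumption.
  repeat split.
  destruct C, K; unfold padd, psub, orth_map, cmul; simpl; f_equal; ring.
Qed.

Lemma parallelogram_orth_image (A B C D K L M N : pt) (t r1 r2 : R) :
  psub L K = orth_map t (r1, r2) (psub B C) ->
  psub M K = orth_map t (r1, r2) (psub A C) ->
  psub N K = orth_map t (r1, r2) (psub D C) ->
  parallelogram A B C D -> parallelogram K L M N.
Proof.
  destruct A, B, C, D, K, L, M, N.
  unfold parallelogram, psub, orth_map, cmul; simpl.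
  intros EL EM EN Hpar.
  injection EL as L1 L2; injection EM as M1 M2; injection EN as N1 N2.
  injection Hpar as P1 P2.
  f_equal; nsatz.
Qed.

Lemma parallelogram_opposite_edges (A B C D : pt) :
  parallelogram A B C D -> psub D C = popp (psub B A) /\ psub A D = popp (psub C B).
Proof.
  destruct A, B, C, D; unfold parallelogram, psub, popp; simpl.
  intros Hpar; injection Hpar as P1 P2.
  split; f_equal; lra.
Qed.

(* [(- e * snd u, e * fst u)] is [e i u]. *)
Lemma csq_eq_popp (u v : pt) :
  csq v = popp (csq u) -> exists e, e * e = 1 /\ v = (- e * snd u, e * fst u).
Proof.
  destruct u as [a b], v as [a' b']; unfold csq, cmul, popp; simpl.
  intros E; injection E as E1 E2.
  assert (Hprod : ((a' + b)² + (b' - a)²) * ((a' - b)² + (b' + a)²) = 0).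
  { unfold Rsqr.
    replace (((a' + b) * (a' + b) + (b' - a) * (b' - a)) *
             ((a' - b) * (a' - b) + (b' + a) * (b' + a)))
      with ((a' * a' - b' * b' + (a * a - b * b)) * (a' * a' - b' * b' + (a * a - b * b))
            + (a' * b' + b' * a' + (a * b + b * a)) * (a' * b' + b' * a' + (a * b + b * a)))
      by ring.
    rewrite E1, E2; ring. }
  destruct (Rmult_integral _ _ Hprod) as [H0 | H0];
    apply Rplus_sqr_eq_0 in H0 as [H1 H2].
  - exists 1; split; [ring | f_equal; lra].
  - exists (-1); split; [ring | f_equal; lra].
Qed.

Lemma imconjmul_mul_i (e1 e2 : R) (u1 u2 : pt) :
  imconjmul (- e1 * snd u1, e1 * fst u1) (- e2 * snd u2, e2 * fst u2)
  = e1 * e2 * imconjmul u1 u2.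
Proof. unfold imconjmul; simpl; ring. Qed.

Lemma same_sign_mul_pos (x y z : R) : same_sign x z -> same_sign y z -> 0 < x * y.
Proof. unfold same_sign; intros [[] | []] [[] | []]; nra. Qed.

Lemma sign_eq_of_mul_pos (e1 e2 x : R) :
  e1 * e1 = 1 -> e2 * e2 = 1 -> 0 < e1 * e2 * x * x -> e1 = e2.
Proof.
  intros H1 H2 H.
  assert (Hp : 0 < e1 * e2).
  { destruct (Rle_or_lt (e1 * e2) 0); [|assumption].
    assert (0 <= x * x) by nra. nra. }
  assert (Hk : (e1 * e2 - 1) * (e1 * e2 + 1) = 0) by nra.
  destruct (Rmult_integral _ _ Hk); nra.
Qed.

(* The sign conditions at the first and third vertex force the same choice
   of [+i] or [-i] for [u3] and [u4]. *)
Lemma admissible_roots_parallelogram (A B C D u1 u2 u3 u4 : pt) :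
  parallelogram A B C D -> admissible_roots A B C D u1 u2 u3 u4 ->
  exists e, e * e = 1 /\
    u3 = (- e * snd u1, e * fst u1) /\ u4 = (- e * snd u2, e * fst u2).
Proof.
  intros Hpar (H1 & H2 & H3 & H4 & S12 & _ & S34).
  destruct (parallelogram_opposite_edges Hpar) as [Z3 Z4].
  rewrite Z3, <- H1 in H3; rewrite Z4, <- H2 in H4.
  destruct (csq_eq_popp H3) as (e & He & E3).
  destruct (csq_eq_popp H4) as (e' & He' & E4).
  rewrite Z3, Z4, imconjmul_popp, E3, E4, imconjmul_mul_i in S34.
  rewrite <- (sign_eq_of_mul_pos He He' (same_sign_mul_pos S34 S12)) in E4.
  exists e; auto.
Qed.

Lemma admissible_roots_norm (A B C D u1 u2 : pt) (e : R) :
  e * e = 1 -> perimeter A B C D = 2 ->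
  admissible_roots A B C D u1 u2 (- e * snd u1, e * fst u1) (- e * snd u2, e * fst u2) ->
  fst u1 * fst u1 + snd u1 * snd u1 + fst u2 * fst u2 + snd u2 * snd u2 = 1.
Proof.
  intros He Hper (H1 & H2 & H3 & H4 & _).
  unfold perimeter in Hper.
  rewrite <- H1, <- H2, <- H3, <- H4, !cabs_csq in Hper; simpl in Hper.
  clear - He Hper; nsatz.
Qed.

Definition perp_frame (a1 b1 a2 b2 e m1 m2 : R) : R * R * R * R :=
  (- (m1 * a2 - m2 * b2), m1 * a1 - m2 * b1, - e * (m1 * b2 + m2 * a2), e * (m1 * b1 + m2 * a1)).

Lemma orthonormal_R2_rot (m1 m2 n1 n2 : R) :
  m1 * m1 + m2 * m2 = 1 -> n1 * n1 + n2 * n2 = 1 -> m1 * n1 + m2 * n2 = 0 ->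
  exists s, s * s = 1 /\ n1 = - s * m2 /\ n2 = s * m1.
Proof.
  intros Hm Hn Hmn.
  set (k := n2 * m1 - n1 * m2).
  assert (Hk : (k - 1) * (k + 1) = 0).
  { replace ((k - 1) * (k + 1))
      with ((m1 * m1 + m2 * m2) * (n1 * n1 + n2 * n2) - (m1 * n1 + m2 * n2) * (m1 * n1 + m2 * n2) - 1)
      by (unfold k; ring).
    rewrite Hm, Hn, Hmn; ring. }
  exists k; split; [nra|].
  assert (Hsq : (n1 + k * m2)² + (n2 - k * m1)² = 0).
  { unfold Rsqr.
    replace ((n1 + k * m2) * (n1 + k * m2) + (n2 - k * m1) * (n2 - k * m1))
      with ((n1 * n1 + n2 * n2) + k * k * (m1 * m1 + m2 * m2) - 2 * k * k) by (unfold k; ring).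
    nra. }
  apply Rplus_sqr_eq_0 in Hsq as [E1 E2]; split; lra.
Qed.

Section PerpFrame.

Variables a1 b1 a2 b2 e : R.
Hypothesis He : e * e = 1.
Hypothesis Hu : a1 * a1 + b1 * b1 + a2 * a2 + b2 * b2 = 1.

(* [(a1, a2, -e b1, -e b2)], [(b1, b2, e a1, e a2)], [(-a2, a1, -e b2, e b1)] and
   [(b2, -b1, -e a2, e a1)] form an orthonormal basis of [R^4]; [perp_frame]
   lists the combinations of the last two. *)
Lemma perp_expansion (c1 c2 c3 c4 : R) :
  dot4 c1 c2 c3 c4 a1 a2 (- e * b1) (- e * b2) = 0 ->
  dot4 c1 c2 c3 c4 b1 b2 (e * a1) (e * a2) = 0 ->
  exists m1 m2, (c1, c2, c3, c4) = perp_frame a1 b1 a2 b2 e m1 m2.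
Proof.
  unfold dot4, perp_frame; intros Ha Hb.
  exists (dot4 c1 c2 c3 c4 (- a2) a1 (- e * b2) (e * b1)),
         (dot4 c1 c2 c3 c4 b2 (- b1) (- e * a2) (e * a1)).
  unfold dot4; repeat f_equal; nsatz.
Qed.

Lemma perp_orthonormal_pair (c1 c2 c3 c4 d1 d2 d3 d4 : R) :
  orthonormal_basis_perp (a1, b1) (a2, b2) (- e * b1, e * a1) (- e * b2, e * a2)
    (c1, d1) (c2, d2) (c3, d3) (c4, d4) ->
  exists m1 m2 s, m1 * m1 + m2 * m2 = 1 /\ s * s = 1 /\
    (c1, c2, c3, c4) = perp_frame a1 b1 a2 b2 e m1 m2 /\
    (d1, d2, d3, d4) = perp_frame a1 b1 a2 b2 e (- s * m2) (s * m1).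
Proof.
  unfold orthonormal_basis_perp, re, im; simpl.
  intros (Hc & Hd & Hcd & Hca & Hcb & Hda & Hdb).
  destruct (perp_expansion Hca Hcb) as (m1 & m2 & Ec).
  destruct (perp_expansion Hda Hdb) as (n1 & n2 & Ed).
  unfold perp_frame in Ec, Ed.
  injection Ec as -> -> -> ->; injection Ed as -> -> -> ->.
  unfold dot4 in Hc, Hd, Hcd.
  assert (Hm : m1 * m1 + m2 * m2 = 1) by nsatz.
  assert (Hn : n1 * n1 + n2 * n2 = 1) by nsatz.
  assert (Hmn : m1 * n1 + m2 * n2 = 0) by nsatz.
  destruct (orthonormal_R2_rot Hm Hn Hmn) as (s & Hs & -> & ->).
  exists m1, m2, s; auto.
Qed.

End PerpFrame.

(* The conjugation in the dual edges occurs exactly for [s = 1], whence the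
   witnesses [t = -s] and [r = -m^2] with [m = m1 + i m2]. *)
Lemma dual_of_parallelogram (A B C D K L M N : pt) :
  perimeter A B C D = 2 -> parallelogram A B C D -> dual_quadrangle A B C D K L M N ->
  exists t r1 r2, t * t = 1 /\ r1 * r1 + r2 * r2 = 1 /\
    psub L K = orth_map t (r1, r2) (psub B C) /\
    psub M K = orth_map t (r1, r2) (psub A C) /\
    psub N K = orth_map t (r1, r2) (psub D C).
Proof.
  intros Hper Hpar (u1 & u2 & u3 & u4 & v1 & v2 & v3 & v4 & Hroots & Hperp & HL & HM & HN & _).
  destruct (admissible_roots_parallelogram Hpar Hroots) as (e & He & -> & ->).
  pose proof (admissible_roots_norm He Hper Hroots) as Hu.
  destruct Hroots as (H1 & H2 & _).
  destruct u1 as [a1 b1], u2 as [a2 b2], v1 as [c1 d1], v2 as [c2 d2],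
    v3 as [c3 d3], v4 as [c4 d4]; simpl in *.
  destruct (perp_orthonormal_pair He Hu Hperp) as (m1 & m2 & s & Hm & Hs & Ec & Ed).
  unfold perp_frame in Ec, Ed.
  injection Ec as -> -> -> ->; injection Ed as -> -> -> ->.
  exists (- s), (- (m1 * m1 - m2 * m2)), (- (2 * m1 * m2)).
  destruct A, B, C, D, K, L, M, N.
  unfold parallelogram, psub, csq, cmul, orth_map in *; simpl in *.
  injection H1 as H1a H1b; injection H2 as H2a H2b; injection Hpar as P1 P2.
  injection HL as L1 L2; injection HM as M1 M2; injection HN as N1 N2.
  repeat split; try f_equal.
  - nsatz.
  - nsatz.
  - clear - L1 H2a H2b Hs; nsatz.
  - clear - L2 H2a H2b Hs; nsatz.
  - clear - L1 M1 H1a H1b H2a H2b Hs; nsatz.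
  - clear - L2 M2 H1a H1b H2a H2b Hs; nsatz.
  - clear - L1 M1 N1 H1a H1b H2a H2b P1 P2 He Hs; nsatz.
  - clear - L2 M2 N2 H1a H1b H2a H2b P1 P2 He Hs; nsatz.
Qed.

Unset Implicit Arguments.

Theorem theorem8p2 (A B C D K L M N : pt) :
  nondegenerate A B C D ->
  perimeter A B C D = 2 ->
  parallelogram A B C D ->
  dual_quadrangle A B C D K L M N ->
  pdist K L = pdist B C /\ pdist L M = pdist A B /\ pdist K M = pdist A C /\
  parallelogram K L M N /\
  (exists f : pt -> pt, isometry f /\
     f K = C /\ f L = B /\ f M = A /\ f N = D).
Proof.
  intros _ Hper Hpar Hdual.
  destruct (dual_of_parallelogram Hper Hpar Hdual)
    as (t & r1 & r2 & Ht & Hr & EL & EM & EN).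
  destruct (congruent_of_orth_image Ht Hr EL EM EN) as (f & Hf & FK & FL & FM & FN).
  split; [|split; [|split; [|split]]].
  - rewrite <- Hf, FK, FL; apply pdist_comm.
  - rewrite <- Hf, FL, FM; apply pdist_comm.
  - rewrite <- Hf, FK, FM; apply pdist_comm.
  - exact (parallelogram_orth_image EL EM EN Hpar).
  - exists f; auto.
Qed.
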